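(* Let $N,M,L$ be positive integers and $\sigma^2>0$. Let $\hat\alpha_i,\hat\alpha_j\in\mathbb C$, $\hat{\mathbf G}_i,\hat{\mathbf G}_j\in\mathbb C^{N\times M}$, $\mathbf a_i,\mathbf a_j\in\mathbb C^N$, $\boldsymbol\theta\in\mathbb C^N$ with $|\boldsymbol\theta(n)|=1$ for all $n$, and $\mathbf x\in\mathbb C^M$. Set $\boldsymbol\Theta=\mathrm{diag}(\boldsymbol\theta)$, $\mathbf X=[\mathbf x,\dots,\mathbf x]\in\mathbb C^{M\times L}$, and for $k\in\{i,j\}$ let $\bar{\mathbf y}_k=\mathrm{vec}\big(\hat\alpha_k\hat{\mathbf G}_k^T\boldsymbol\Theta\mathbf a_k\mathbf a_k^T\boldsymbol\Theta\hat{\mathbf G}_k\mathbf X\big)$ and $d=\frac{1}{\sigma^2}\|\bar{\mathbf y}_i-\bar{\mathbf y}_j\|^2$. Define $\mathbf Q=\boldsymbol\theta\boldsymbol\theta^H$ and, for $k,l\in\{i,j\}$, $$\mathbf A_{k,l}=\big(\hat{\mathbf G}_l^{*}\hat{\mathbf G}_k^{T}\big)\odot\big(\mathbf a_k\mathbf a_l^H\big)^T,\qquad \mathbf B_{k,l}=\big(\mathbf a_l^{*}\mathbf a_k^T\big)\odot\big(\hat{\mathbf G}_k\mathbf x\mathbf x^H\hat{\mathbf G}_l^H\big)^T.$$ Then $d=\varphi$, where $$\varphi=\frac{L}{\sigma^2}\Big(|\hat\alpha_i|^2\mathrm{tr}\big(\mathbf Q^H\mathbf A_{i,i}\mathbf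 Q\mathbf B_{i,i}\big)-2\Re\big\{\hat\alpha_i\hat\alpha_j^{*}\mathrm{tr}\big(\mathbf Q^H\mathbf A_{i,j}\mathbf Q\mathbf B_{i,j}\big)\big\}+|\hat\alpha_j|^2\mathrm{tr}\big(\mathbf Q^H\mathbf A_{j,j}\mathbf Q\mathbf B_{j,j}\big)\Big).$$
   Context: $\odot$ is the Hadamard (entrywise) product, $(\cdot)^*$ entrywise complex conjugate, $(\cdot)^T$ transpose, $(\cdot)^H$ conjugate transpose, $\mathrm{vec}$ column-stacking vectorization, $\|\cdot\|$ the Euclidean norm. In the paper $d$ is the (symmetrized relative-entropy) distance between the Gaussian observation models under two target-location hypotheses $i$ and $j$. *)

(* complex numbers as an arbitrary numClosedFieldType C
   (e.g. algC, or complex R for R : rcfType); conjugation is Num.conj. *)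
From HB Require Import structures.
From mathcomp Require Import all_boot all_order all_algebra.
Set Implicit Arguments. Unset Strict Implicit. Unset Printing Implicit Defensive.
Import Order.TTheory GRing.Theory Num.Theory.
Local Open Scope ring_scope.

Section Defs.
Variable C : numClosedFieldType.

Definition conjm m n (A : 'M[C]_(m, n)) : 'M[C]_(m, n) := map_mx Num.conj A.
Definition ctrmx m n (A : 'M[C]_(m, n)) : 'M[C]_(n, m) := (conjm A)^T.
Definition hadamard m n (A B : 'M[C]_(m, n)) : 'M[C]_(m, n) :=
  \matrix_(i, j) (A i j * B i j).
(* column-stacking vectorization: entry (i,j) of A goes to index j*m+i *)
Definition vec m n (A : 'M[C]_(m, n)) : 'cV[C]_(n * m) := (mxvec A^T)^T.
Definition normsq k (v : 'cV[C]_k) : C := \sum_(i < k) `|v i 0| ^+ 2.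

Definition repcol M L (x : 'cV[C]_M) : 'M[C]_(M, L) := \matrix_(i, l) x i 0.

Definition ybar N M L (alpha : C) (G : 'M[C]_(N, M)) (a theta : 'cV[C]_N)
    (x : 'cV[C]_M) : 'cV[C]_(L * M) :=
  let Theta := diag_mx theta^T in
  vec (alpha *: (G^T *m Theta *m a *m a^T *m Theta *m G *m repcol L x)).

Definition Amx N M (Gk Gl : 'M[C]_(N, M)) (ak al : 'cV[C]_N) : 'M[C]_N :=
  hadamard (conjm Gl *m Gk^T) (ak *m ctrmx al)^T.

Definition Bmx N M (Gk Gl : 'M[C]_(N, M)) (ak al : 'cV[C]_N) (x : 'cV[C]_M)
    : 'M[C]_N :=
  hadamard (conjm al *m ak^T) (Gk *m x *m ctrmx x *m ctrmx Gl)^T.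

End Defs.

(* Write Theta = diag(theta), v_k = G_k^T Theta a_k (rx_vec) and
   u_k = a_k^T Theta G_k x (tx_gain).
   Every column of G_k^T Theta a_k a_k^T Theta G_k X equals u_k v_k, so
   d = (L / sigma^2) ||alpha_i u_i v_i - alpha_j u_j v_j||^2, whose expansion
   has the three terms of phi.  Since Q is rank one and Hermitian,
   tr(Q^H A Q B) = (theta^H A theta)(theta^H B theta); a Hadamard product with
   a rank-one matrix is a diagonal scaling, so
   A_{k,l} = diag(a_l^* ) G_l^* G_k^T diag(a_k), whence
   theta^H A_{k,l} theta = v_l^H v_k, and likewise
   theta^H B_{k,l} theta = u_k u_l^*. *)

From HB Require Import structures.
From mathcomp Require Import all_boot all_order all_algebra.
From mathcomp Require Import ring.
Import Order.TTheory GRing.Theory Num.Theory.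
Local Open Scope ring_scope.
Set Implicit Arguments. Unset Strict Implicit.

Section CommRingMatrix.
Variable R : comPzRingType.

Lemma diag_mx_mulC n (p q : 'cV[R]_n) : diag_mx p^T *m q = diag_mx q^T *m p.
Proof. by apply/matrixP => i j; rewrite !mul_diag_mx !mxE [j]ord1 mulrC. Qed.

Lemma mulmx11E (s t : 'M[R]_1) : (s *m t) 0 0 = s 0 0 * t 0 0.
Proof. by rewrite {1}[s]mx11_scalar mul_scalar_mx mxE. Qed.

Lemma mxtrace_outer_sandwich n (u : 'cV[R]_n) (r : 'rV[R]_n) (A B : 'M[R]_n) :
  \tr (u *m r *m A *m (u *m r) *m B) = (r *m A *m u) 0 0 * (r *m B *m u) 0 0.
Proof.
have -> : u *m r *m A *m (u *m r) *m B = u *m (r *m A *m u *m r *m B).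
  by rewrite !mulmxA.
by rewrite mxtrace_mulC trace_mx11 -mulmx11E !mulmxA.
Qed.

End CommRingMatrix.

Section ComplexMatrix.
Variable C : numClosedFieldType.

Lemma conjm_mul m n p (A : 'M[C]_(m, n)) (B : 'M[C]_(n, p)) :
  conjm (A *m B) = conjm A *m conjm B.
Proof. exact: map_mxM. Qed.

Lemma ctrmx_mul m n p (A : 'M[C]_(m, n)) (B : 'M[C]_(n, p)) :
  ctrmx (A *m B) = ctrmx B *m ctrmx A.
Proof. by rewrite /ctrmx conjm_mul trmx_mul. Qed.

Lemma ctrmxK m n (A : 'M[C]_(m, n)) : ctrmx (ctrmx A) = A.
Proof. by apply/matrixP => i j; rewrite !mxE conjCK. Qed.

Lemma ctrmx_tr m n (A : 'M[C]_(m, n)) : ctrmx A^T = conjm A.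
Proof. by apply/matrixP => i j; rewrite !mxE. Qed.

Lemma ctrmx_diag n (r : 'rV[C]_n) : ctrmx (diag_mx r) = diag_mx (conjm r).
Proof.
by apply/matrixP => i j; rewrite !mxE rmorphMn eq_sym; case: eqP => // ->.
Qed.

Lemma hadamard_outer m n (A : 'M[C]_(m, n)) (p : 'cV[C]_m) (q : 'cV[C]_n) :
  hadamard A (p *m q^T) = diag_mx p^T *m A *m diag_mx q^T.
Proof.
apply/matrixP => i j.
by rewrite mul_mx_diag mul_diag_mx !mxE big_ord1 !mxE; ring.
Qed.

Lemma Amx_diag N M (Gk Gl : 'M[C]_(N, M)) (ak al : 'cV[C]_N) :
  Amx Gk Gl ak al = diag_mx (conjm al)^T *m conjm Gl *m Gk^T *m diag_mx ak^T.
Proof. by rewrite /Amx trmx_mul /ctrmx trmxK hadamard_outer !mulmxA. Qed.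

Lemma Bmx_diag N M (Gk Gl : 'M[C]_(N, M)) (ak al : 'cV[C]_N) (x : 'cV[C]_M) :
  Bmx Gk Gl ak al x =
  diag_mx (conjm (Gl *m x))^T *m conjm al *m ak^T *m diag_mx (Gk *m x)^T.
Proof.
rewrite /Bmx -[_ *m ctrmx Gl]mulmxA -ctrmx_mul trmx_mul /ctrmx trmxK.
by rewrite hadamard_outer !mulmxA.
Qed.

Lemma vecB m n (A B : 'M[C]_(m, n)) : vec (A - B) = vec A - vec B.
Proof. by rewrite /vec !linearB. Qed.

Lemma normsq_vec m n (A : 'M[C]_(m, n)) :
  normsq (vec A) = \sum_i \sum_j `|A i j| ^+ 2.
Proof.
rewrite /normsq exchange_big pair_bigA (reindex _ (curry_mxvec_bij _ _)) /=.
by apply: eq_bigr => -[j i] _; rewrite !mxE /= mxvecE mxE.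
Qed.

Lemma repcolE M L (y : 'cV[C]_M) : repcol L y = y *m const_mx 1.
Proof. by apply/matrixP => i l; rewrite !mxE big_ord1 mxE mulr1. Qed.

Lemma repcolB M L (u w : 'cV[C]_M) : repcol L (u - w) = repcol L u - repcol L w.
Proof. by rewrite !repcolE mulmxBl. Qed.

Lemma normsq_vec_repcol M L (y : 'cV[C]_M) :
  normsq (vec (repcol L y)) = L%:R * normsq y.
Proof.
rewrite normsq_vec /normsq mulr_sumr; apply: eq_bigr => i _.
by under eq_bigr do rewrite mxE; rewrite sumr_const card_ord mulr_natl.
Qed.

Lemma normsq_scaleB n (a b : C) (v w : 'cV[C]_n) :
  normsq (a *: v - b *: w) =
  `|a| ^+ 2 * (ctrmx v *m v) 0 0 - 2%:R * 'Re (a * b^* * (ctrmx w *m v) 0 0)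
  + `|b| ^+ 2 * (ctrmx w *m w) 0 0.
Proof.
have twoRe (z : C) : 2%:R * 'Re z = z + z^*.
  by rewrite ReE mulrC -mulrA mulVf ?mulr1 // pnatr_eq0.
rewrite twoRe !mxE rmorphM rmorph_sum /= !mulr_sumr /normsq.
rewrite -big_split -sumrB -big_split /=.
apply: eq_bigr => p _; rewrite !mxE !normCK rmorphB !rmorphM /= !conjCK.
ring.
Qed.

End ComplexMatrix.

Section Echo.
Variables (C : numClosedFieldType) (N M : nat).
Variables (theta : 'cV[C]_N) (x : 'cV[C]_M).
Local Notation Theta := (diag_mx theta^T).

Definition rx_vec (G : 'M[C]_(N, M)) (a : 'cV[C]_N) : 'cV[C]_M :=
  G^T *m Theta *m a.
Definition tx_gain (G : 'M[C]_(N, M)) (a : 'cV[C]_N) : C :=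
  (a^T *m Theta *m G *m x) 0 0.

Lemma echo_factor G a :
  G^T *m Theta *m a *m a^T *m Theta *m G *m x = tx_gain G a *: rx_vec G a.
Proof.
have -> : G^T *m Theta *m a *m a^T *m Theta *m G *m x
          = rx_vec G a *m (a^T *m Theta *m G *m x) by rewrite !mulmxA.
by rewrite [a^T *m _ *m _ *m _]mx11_scalar mul_mx_scalar.
Qed.

Lemma Amx_form Gk Gl ak al :
  (ctrmx theta *m Amx Gk Gl ak al *m theta) 0 0
  = (ctrmx (rx_vec Gl al) *m rx_vec Gk ak) 0 0.
Proof.
rewrite Amx_diag /rx_vec -!mulmxA.
rewrite [Theta *m al]diag_mx_mulC [Theta *m ak]diag_mx_mulC.
by rewrite !ctrmx_mul ctrmx_tr ctrmx_diag !mulmxA /conjm map_trmx.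
Qed.

Lemma Bmx_form Gk Gl ak al :
  (ctrmx theta *m Bmx Gk Gl ak al x *m theta) 0 0
  = tx_gain Gk ak * (tx_gain Gl al)^*.
Proof.
have -> : ctrmx theta *m Bmx Gk Gl ak al x *m theta
  = ctrmx (al^T *m (Theta *m (Gl *m x))) *m (ak^T *m (Theta *m (Gk *m x))).
  rewrite Bmx_diag !(diag_mx_mulC theta) !ctrmx_mul ctrmx_tr ctrmx_diag.
  by rewrite !mulmxA /conjm map_trmx.
by rewrite mulmx11E mxE /tx_gain !mulmxA mxE mulrC.
Qed.

Lemma ybarE L alpha G a :
  ybar L alpha G a theta x
  = vec (repcol L ((alpha * tx_gain G a) *: rx_vec G a)).
Proof. by rewrite /ybar /= !repcolE mulmxA echo_factor scalemxAl scalerA. Qed.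

End Echo.

Theorem proposition3 (C : numClosedFieldType) (N M L : nat)
  (hN : (0 < N)%N) (hM : (0 < M)%N) (hL : (0 < L)%N)
  (sigma2 : C) (hsigma : 0 < sigma2)
  (alpha_i alpha_j : C) (G_i G_j : 'M[C]_(N, M)) (a_i a_j theta : 'cV[C]_N)
  (x : 'cV[C]_M)
  (htheta : forall n : 'I_N, `|theta n 0| = 1) :
  let d := sigma2^-1 * normsq (ybar L alpha_i G_i a_i theta x
                               - ybar L alpha_j G_j a_j theta x) in
  let Q := theta *m ctrmx theta in
  let T (Gk Gl : 'M[C]_(N, M)) (ak al : 'cV[C]_N) :=
      \tr (ctrmx Q *m Amx Gk Gl ak al *m Q *m Bmx Gk Gl ak al x) in
  let phi := (L%:R / sigma2) *
      (`|alpha_i| ^+ 2 * T G_i G_i a_i a_i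
       - 2%:R * 'Re (alpha_i * Num.conj alpha_j * T G_i G_j a_i a_j)
       + `|alpha_j| ^+ 2 * T G_j G_j a_j a_j) in
  d = phi.
Proof.
move=> d Q T phi.
have QH : ctrmx Q = Q by rewrite /Q ctrmx_mul ctrmxK.
rewrite /phi /T QH /Q !mxtrace_outer_sandwich !Amx_form !Bmx_form.
rewrite /d !ybarE -vecB -repcolB normsq_vec_repcol normsq_scaleB.
set ui := tx_gain theta x G_i a_i; set uj := tx_gain theta x G_j a_j.
set vji := (ctrmx (rx_vec theta G_j a_j) *m rx_vec theta G_i a_i) 0 0.
have -> : alpha_i * ui * (alpha_j * uj)^* * vji
          = alpha_i * alpha_j^* * (vji * (ui * uj^*)).
  by rewrite rmorphM /=; ring.
rewrite !normrM !exprMn !normCK; ring.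
Qed.
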